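(* Let $H$ and $G$ be as in the construction described in the context. If $H$ is linearly orderable, then so is $G$.
   Context: A group is linearly orderable if it admits a linear order $\le$ such that $g_1\le g_2$ implies $g_1x\le g_2x$ and $xg_1\le xg_2$ for all $x$. Construction: $H$ is a group generated by a countable set $\{a^{(1)},a^{(2)},\ldots\}$. For groups $A,B$, the wreath product $A\,\mathrm{Wr}\,B$ is the semidirect product $A^B\rtimes B$, where $A^B$ is the group of all functions $B\to A$ with pointwise multiplication and $B$ acts by $(bf)(x)=f(xb)$. Let $Z=\langle z\rangle$ be infinite cyclic and let $b^{(i)}\in H^Z$ be given by $b^{(i)}(z^k)=a^{(i)}$ if $k>0$ and $b^{(i)}(z^k)=1$ otherwise. Let $K=\langle z,b^{(i)}\ (i\in\mathbb{N})\rangle\le H\,\mathrm{Wr}\,Z$. Let $\langle s\rangle$ be infinite cyclic and let $c\in K^{\langle s\rangle}$ be given by $c(s)=z$, $c(s^{2^i})=b^{(i)}$ for $i>0$, and $c(s^k)=1$ otherwise. Let $G=\langle c,s\rangle\le K\,\mathrm{Wr}\,\langle s\rangle$. *)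

From mathcomp Require Import all_boot all_order all_algebra.
Set Implicit Arguments. Unset Strict Implicit. Unset Printing Implicit Defensive.
Import GRing.Theory Num.Theory.
Local Open Scope ring_scope.

Definition is_group (T : Type) (mul : T -> T -> T) (one : T) (inv : T -> T) : Prop :=
  (forall x y z, mul x (mul y z) = mul (mul x y) z) /\
  (forall x, mul one x = x) /\ (forall x, mul x one = x) /\
  (forall x, mul (inv x) x = one) /\ (forall x, mul x (inv x) = one).

Definition gen (T : Type) (mul : T -> T -> T) (one : T) (inv : T -> T)
    (S : T -> Prop) (x : T) : Prop :=
  forall P : T -> Prop, P one -> (forall u v, P u -> P v -> P (mul u v)) ->
    (forall u, P u -> P (inv u)) -> (forall u, S u -> P u) -> P x.

Definition lin_orderable (T : Type) (mul : T -> T -> T) (P : T -> Prop) : Prop :=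
  exists le : T -> T -> Prop,
    (forall x, P x -> le x x) /\
    (forall x y, P x -> P y -> le x y -> le y x -> x = y) /\
    (forall x y z, P x -> P y -> P z -> le x y -> le y z -> le x z) /\
    (forall x y, P x -> P y -> le x y \/ le y x) /\
    (forall g1 g2 x, P g1 -> P g2 -> P x -> le g1 g2 ->
       le (mul g1 x) (mul g2 x) /\ le (mul x g1) (mul x g2)).

(* Wreath product A Wr Z = A^Z ⋊ Z, Z infinite cyclic written additively as int.
   An element (f, b) stands for the product f·z^b; the action is (b f)(x) = f(x b),
   i.e. (b f)(x) = f (x + b). *)
Definition wr (A : Type) : Type := ((int -> A) * int)%type.

Definition wr_mul (A : Type) (mul : A -> A -> A) (u v : wr A) : wr A :=
  (fun x => mul (u.1 x) (v.1 (x + u.2)), u.2 + v.2).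

Definition wr_one (A : Type) (one : A) : wr A := (fun _ => one, 0).

Definition wr_inv (A : Type) (inv : A -> A) (u : wr A) : wr A :=
  (fun x => inv (u.1 (x - u.2)), - u.2).

Section Construction.
Variables (H : Type) (mul : H -> H -> H) (one : H) (inv : H -> H) (a : nat -> H).

Definition zK : wr H := (fun _ => one, 1).
Definition bK (i : nat) : wr H := (fun k => if 0 < k then a i else one, 0).

Definition K_set : wr H -> Prop :=
  gen (wr_mul mul) (wr_one one) (wr_inv inv)
      (fun x => x = zK \/ exists i : nat, (0 < i)%N /\ x = bK i).

(* c : <s> -> K, c(s) = z, c(s^(2^i)) = b^(i) for i > 0, c(s^k) = 1 otherwise *)
Definition c_fun (k : int) : wr H :=
  match k with
  | Posz n =>
      if n == 1%N then zK
      else if (1 < n)%N && (n == 2 ^ trunc_log 2 n)%N then bK (trunc_log 2 n)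
      else wr_one one
  | Negz _ => wr_one one
  end.

Definition cG : wr (wr H) := (c_fun, 0).
Definition sG : wr (wr H) := (fun _ => wr_one one, 1).

Definition G_set : wr (wr H) -> Prop :=
  gen (wr_mul (wr_mul mul)) (wr_one (wr_one one)) (wr_inv (wr_inv inv))
      (fun x => x = cG \/ x = sG).
End Construction.

(* A linearly ordered group A gives a linear order on the elements of A Wr Z whose
   function part has support bounded below: compare the Z-components first and then
   the function parts lexicographically, at the least point where they differ.  Such
   a point exists because the supports are bounded below, and the order is invariant
   under multiplication because right multiplication acts pointwise and left
   multiplication translates the coordinates.  K consists of such elements of H Wr Z,
   and G of such elements of K Wr <s>, so applying this twice orders G. *)
From mathcomp Require Import all_boot all_order all_algebra zify.
From Stdlib Require Import Classical FunctionalExtensionality.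
Import GRing.Theory Num.Theory.
Local Open Scope ring_scope.
Set Implicit Arguments. Unset Strict Implicit.

Section Generated.
Variables (T : Type) (mul : T -> T -> T) (one : T) (inv : T -> T) (S : T -> Prop).

Lemma gen_one : gen mul one inv S one.
Proof. by move=> P P1. Qed.

Lemma gen_mul u v : gen mul one inv S u -> gen mul one inv S v -> gen mul one inv S (mul u v).
Proof. by move=> gu gv P P1 PM PI PS; apply: (PM); [exact: gu | exact: gv]. Qed.

Lemma gen_inv u : gen mul one inv S u -> gen mul one inv S (inv u).
Proof. by move=> gu P P1 PM PI PS; apply: (PI); exact: gu. Qed.

Lemma gen_sub u : S u -> gen mul one inv S u.
Proof. by move=> Su P P1 PM PI PS; apply: PS. Qed.

End Generated.

Lemma lin_orderable_sub (T : Type) (mul : T -> T -> T) (P Q : T -> Prop) :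
  lin_orderable mul P -> (forall x, Q x -> P x) -> lin_orderable mul Q.
Proof.
case=> le [refl [anti [trans [total comp]]]] QP; exists le.
split; [|split; [|split; [|split]]].
- by move=> x /QP; apply: refl.
- by move=> x y /QP Px /QP Py; apply: anti.
- by move=> x y z /QP Px /QP Py /QP Pz; apply: trans.
- by move=> x y /QP Px /QP Py; apply: total.
- by move=> g1 g2 x /QP P1 /QP P2 /QP Px; apply: comp.
Qed.

Section GroupFacts.
Variables (A : Type) (mul : A -> A -> A) (one : A) (inv : A -> A).
Hypothesis grpA : is_group mul one inv.

Lemma group_mulIr x y z : mul x z = mul y z -> x = y.
Proof.
case: grpA => [mulA [_ [mul1 [_ mulV]]]] e.
by rewrite -(mul1 x) -(mul1 y) -(mulV z) !mulA e.
Qed.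

Lemma group_mulIl x y z : mul z x = mul z y -> x = y.
Proof.
case: grpA => [mulA [one_mul [_ [Vmul _]]]] e.
by rewrite -(one_mul x) -(one_mul y) -(Vmul z) -!mulA e.
Qed.

Lemma group_inv1 : inv one = one.
Proof. by case: grpA => [_ [_ [mul1 [Vmul _]]]]; rewrite -{2}(Vmul one) mul1. Qed.

Lemma wr_is_group : is_group (wr_mul mul) (wr_one one) (wr_inv inv).
Proof.
case: grpA => [mulA [one_mul [mul1 [Vmul mulV]]]].
rewrite /wr_mul /wr_one /wr_inv.
split; [|split; [|split; [|split]]] => [[f b]|[f b]|[f b]|[f b]|[f b]] /=.
- move=> [g c] [h d] /=; rewrite addrA; congr pair.
  by apply: functional_extensionality => x; rewrite mulA addrA.
- by rewrite add0r; congr pair; apply: functional_extensionality => x; rewrite one_mul addr0.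
- by rewrite addr0; congr pair; apply: functional_extensionality => x; rewrite mul1.
- by rewrite addNr; congr pair; apply: functional_extensionality => x; rewrite Vmul.
- by rewrite addrN; congr pair; apply: functional_extensionality => x; rewrite addrK mulV.
Qed.

End GroupFacts.

Lemma ex_least_int (Q : int -> Prop) (N : int) :
  (forall x, Q x -> N <= x) -> forall x, Q x -> exists m, Q m /\ forall y, y < m -> ~ Q y.
Proof.
move=> QN.
suff least_below n : forall x, x <= N + n%:Z -> Q x -> exists m, Q m /\ forall y, y < m -> ~ Q y.
  by move=> x Qx; apply: (least_below `|x - N|%N x) => //; have := QN x Qx; lia.
elim: n => [|n IHn] x le_x Qx.
  by exists x; split => // y lt_y Qy; have := QN y Qy; lia.
case: (classic (exists y, y < x /\ Q y)) => [[y [lt_y Qy]]|none_below].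
  by apply: (IHn y) => //; lia.
by exists x; split => // y lt_y Qy; apply: none_below; exists y.
Qed.

Lemma ex_first_difference (A : Type) (f g : int -> A) (N : int) :
  (forall x, x < N -> f x = g x) -> f <> g ->
  exists m, f m <> g m /\ forall y, y < m -> f y = g y.
Proof.
move=> eq_below neq_fg.
have [x0 neq_x0] : exists x, f x <> g x.
  by apply: not_all_ex_not => eq_fg; apply/neq_fg/functional_extensionality.
have diff_ge x : f x <> g x -> N <= x.
  by move=> neq_x; case: (lerP N x) => // lt_x; case: neq_x; apply: eq_below.
have [m [neq_m least_m]] := ex_least_int diff_ge neq_x0.
by exists m; split => // y lt_y; apply: NNPP; apply: least_m.
Qed.

Definition lex (A : Type) (le : A -> A -> Prop) (f g : int -> A) : Prop :=
  f = g \/ exists m, (forall y, y < m -> f y = g y) /\ le (f m) (g m) /\ f m <> g m.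

Section Lexicographic.
Variables (A : Type) (P : A -> Prop) (le : A -> A -> Prop).
Hypothesis le_anti : forall x y, P x -> P y -> le x y -> le y x -> x = y.
Hypothesis le_trans : forall x y z, P x -> P y -> P z -> le x y -> le y z -> le x z.
Hypothesis le_total : forall x y, P x -> P y -> le x y \/ le y x.

Variables f g h : int -> A.
Hypotheses (Pf : forall x, P (f x)) (Pg : forall x, P (g x)) (Ph : forall x, P (h x)).

Lemma lex_anti : lex le f g -> lex le g f -> f = g.
Proof.
case=> [//|[m1 [eq1 [le1 neq1]]]] [/esym //|[m2 [eq2 [le2 neq2]]]].
have [lt12|[lt21|eq12]] : m1 < m2 \/ m2 < m1 \/ m1 = m2 by lia.
- by case: neq1; rewrite eq2.
- by case: neq2; rewrite eq1.
- by subst m2; case: neq1; apply: le_anti.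
Qed.

Lemma lex_trans : lex le f g -> lex le g h -> lex le f h.
Proof.
case=> [-> //|[m1 [eq1 [le1 neq1]]]] [<-|[m2 [eq2 [le2 neq2]]]]; first by right; exists m1.
right; have [lt12|[lt21|eq12]] : m1 < m2 \/ m2 < m1 \/ m1 = m2 by lia.
- exists m1; rewrite -(eq2 m1 lt12); split=> // y lt_y.
  by rewrite eq1 // eq2 //; lia.
- exists m2; rewrite (eq1 m2 lt21); split=> // y lt_y.
  by rewrite eq1 ?eq2 //; lia.
- subst m2; exists m1; split; first by move=> y lt_y; rewrite eq1 ?eq2.
  split; first exact: (le_trans (Pf m1) (Pg m1) (Ph m1)).
  by move=> eq_fh; case: neq1; apply: le_anti => //; rewrite eq_fh.
Qed.

Lemma lex_total N : (forall x, x < N -> f x = g x) -> lex le f g \/ lex le g f.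
Proof.
move=> eq_below; case: (classic (f = g)) => [->|neq_fg]; first by left; left.
have [m [neq_m least_m]] := ex_first_difference eq_below neq_fg.
case: (le_total (Pf m) (Pg m)) => le_m; [left | right]; right; exists m.
- by split=> // y /least_m.
- by split=> [y /least_m ->|]; split=> // /esym.
Qed.

Lemma lex_map (phi : int -> A -> A) :
  (forall x u v, P u -> P v -> le u v -> le (phi x u) (phi x v)) ->
  (forall x u v, phi x u = phi x v -> u = v) ->
  lex le f g -> lex le (fun x => phi x (f x)) (fun x => phi x (g x)).
Proof.
move=> phi_mono phi_inj [->|[m [eq_below [le_m neq_m]]]]; first by left.
right; exists m; split; first by move=> y /eq_below ->.
by split; [apply: phi_mono | move/phi_inj].
Qed.

End Lexicographic.

Lemma lex_shift (A : Type) (le : A -> A -> Prop) (f g : int -> A) d :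
  lex le f g -> lex le (fun x => f (x + d)) (fun x => g (x + d)).
Proof.
case=> [->|[m [eq_below [le_m neq_m]]]]; first by left.
right; exists (m - d); rewrite subrK; split=> // y lt_y.
by apply: eq_below; lia.
Qed.

Definition wr_lex (A : Type) (le : A -> A -> Prop) (u v : wr A) : Prop :=
  u.2 < v.2 \/ u.2 = v.2 /\ lex le u.1 v.1.

Definition wr_lbounded (A : Type) (one : A) (P : A -> Prop) (u : wr A) : Prop :=
  (forall x, P (u.1 x)) /\ exists N, forall x, x < N -> u.1 x = one.

Section WreathOrder.
Variables (A : Type) (mul : A -> A -> A) (one : A) (inv : A -> A) (P : A -> Prop).
Hypothesis grpA : is_group mul one inv.

Lemma wr_lex_orderable :
  lin_orderable mul P -> lin_orderable (wr_mul mul) (wr_lbounded one P).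
Proof.
case=> le [_ [le_anti [le_trans [le_total le_mul]]]].
exists (wr_lex le); rewrite /wr_lex /wr_lbounded.
split; [|split; [|split; [|split]]].
- by move=> u _; right; split=> //; left.
- move=> [f b] [g c] /= [Pf _] [Pg _] [lt_bc|[eq_bc lex_fg]] [lt_cb|[eq_cb lex_gf]]; try lia.
  by rewrite eq_bc (lex_anti le_anti Pf Pg lex_fg lex_gf).
- move=> [f b] [g c] [h d] /= [Pf _] [Pg _] [Ph _].
  move=> [lt_bc|[-> lex_fg]] [lt_cd|[<- lex_gh]]; try (left; lia).
  by right; split=> //; apply: (lex_trans le_anti le_trans Pf Pg Ph).
- move=> [f b] [g c] /= [Pf [Nf f1]] [Pg [Ng g1]].
  have [lt_bc|[lt_cb|<-]] : b < c \/ c < b \/ b = c by lia.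
  + by left; left.
  + by right; left.
  + have eq_below x : x < Num.min Nf Ng -> f x = g x.
      by move=> lt_x; rewrite f1 ?g1 //; lia.
    by case: (lex_total le_total Pf Pg eq_below) => ?; [left | right]; right.
- move=> [f b] [g c] [h d]; rewrite /wr_mul /= => [[Pf _] [Pg _] [Ph _]].
  move=> [lt_bc|[<- lex_fg]]; first by split; left; lia.
  split; right; split=> //.
  + apply: (lex_map Pf Pg (phi := fun x u => mul u (h (x + b)))) lex_fg.
    * by move=> x u v Pu Pv /(le_mul _ _ _ Pu Pv (Ph (x + b))) [].
    * by move=> x u v /= /(group_mulIr grpA).
  + apply: (lex_map (fun x => Pf (x + d)) (fun x => Pg (x + d))
      (phi := fun x u => mul (h x) u)) (lex_shift d lex_fg).
    * by move=> x u v Pu Pv /(le_mul _ _ _ Pu Pv (Ph x)) [].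
    * by move=> x u v /= /(group_mulIl grpA).
Qed.

Lemma wr_lbounded_gen (S : wr A -> Prop) :
  P one -> (forall x y, P x -> P y -> P (mul x y)) -> (forall x, P x -> P (inv x)) ->
  (forall u, S u -> wr_lbounded one P u) ->
  forall u, gen (wr_mul mul) (wr_one one) (wr_inv inv) S u -> wr_lbounded one P u.
Proof.
have [_ [one_mul _]] := grpA.
move=> P1 PM PI S_bounded u gen_u; apply: gen_u S_bounded; rewrite /wr_lbounded.
- by split=> //; exists 0.
- move=> [f b] [g c] /= [Pf [Nf f1]] [Pg [Ng g1]].
  split=> [x|]; first exact: PM.
  by exists (Num.min Nf (Ng - b)) => x lt_x; rewrite f1 ?g1 ?one_mul //; lia.
- move=> [f b] /= [Pf [Nf f1]].
  split=> [x|]; first exact: PI.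
  by exists (Nf + b) => x lt_x; rewrite f1 ?(group_inv1 grpA) //; lia.
Qed.

End WreathOrder.

Section Construction.
Variables (H : Type) (mul : H -> H -> H) (one : H) (inv : H -> H) (a : nat -> H).
Hypothesis grpH : is_group mul one inv.

Lemma K_set_wr_lbounded u : K_set mul one inv a u -> wr_lbounded one (fun _ => True) u.
Proof.
apply: wr_lbounded_gen => //.
move=> _ [->|[i [_ ->]]]; split=> //; exists 0 => x lt_x //=.
by case: ifP => //; lia.
Qed.

Lemma c_fun_in_K k : K_set mul one inv a (c_fun one a k).
Proof.
case: k => [n|n] /=; last exact: gen_one.
case: ifP => [_|_]; first by apply: gen_sub; left.
case: ifP => [/andP[n_gt1 _]|_]; last exact: gen_one.
by apply: gen_sub; right; exists (trunc_log 2 n); rewrite trunc_log_gt0.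
Qed.

Lemma G_set_wr_lbounded u :
  G_set mul one inv a u -> wr_lbounded (wr_one one) (K_set mul one inv a) u.
Proof.
apply: wr_lbounded_gen.
- exact: wr_is_group.
- exact: gen_one.
- exact: gen_mul.
- exact: gen_inv.
move=> _ [->|->]; split.
- exact: c_fun_in_K.
- by exists 0 => -[n|n] //=; lia.
- by move=> k; apply: gen_one.
- by exists 0.
Qed.

End Construction.

Theorem corollary4 (H : Type) (mul : H -> H -> H) (one : H) (inv : H -> H)
  (hgrp : is_group mul one inv) (a : nat -> H)
  (hgen : forall h : H, gen mul one inv (fun x => exists i : nat, (0 < i)%N /\ x = a i) h)
  (hord : lin_orderable mul (fun _ => True)) :
  lin_orderable (wr_mul (wr_mul mul)) (G_set mul one inv a).
Proof.
(* [hgen] is deliberately unused: only the linear order on H matters. *)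
have K_orderable : lin_orderable (wr_mul mul) (K_set mul one inv a).
  by apply: lin_orderable_sub (wr_lex_orderable hgrp hord) _ => u /(K_set_wr_lbounded hgrp).
apply: lin_orderable_sub (wr_lex_orderable (wr_is_group hgrp) K_orderable) _.
by move=> u /(G_set_wr_lbounded hgrp).
Qed.
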